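(* For any black/white coloring of $\mathbf N=\{1,\dots,2n\}$ with $n$ nodes of each color, there exists a planar black-white pairing $\rho$ of $\mathbf N$ such that $$\mathrm{sign}_{BW}(\rho)\prod_{\{b,w\}\in\rho}\mathrm{sign}(b,w)=\mathrm{sign}_c(\mathbf N).$$
   Context: Nodes $1,\dots,2n$ arranged counterclockwise, each black or white. Pairing = partition into 2-element blocks; planar = no two pairs $\{a,c\},\{b,d\}$ with $a<b<c<d$. Black-white pairing: each pair has a black and a white node; with black nodes $b_1<\dots<b_n$ and white nodes $w_1<\dots<w_n$, $\mathrm{sign}_{BW}(\rho)$ is the sign of the permutation $\theta$ with $\rho(b_i)=w_{\theta(i)}$. A couple of consecutive nodes of the same color is $(m,m+1)$, $m\in\{1,\dots,2n\}$, indices mod $2n$, with $m,m+1$ same color. For black $b$, white $w$: $a_{b,w}$ = number of $m$ with $\min(b,w)\le m<m+1\le \max(b,w)$, $m,m+1$ same color; $\mathrm{sign}(b,w)=(-1)^{(|b-w|+a_{b,w}-1)/2}$. With all couples $(n_j,n_j+1)$, $n_1<\dots<n_{2k}$, black-couple first elements $s_1<\dots<s_k$ and white-couple first elements $u_1<\dots<u_k$: if node 1 is black let $\varphi(u_i)=2i-1,\varphi(s_i)=2i$, otherwise $\varphi(s_i)=2i-1,\varphi(u_i)=2i$; $\mathrm{sign}_c(\mathbf N)$ is the sign of the permutation $(\varphi(n_1),\dots,\varphi(n_{2k}))$, and $1$ if $k=0$. *)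

(* Nodes are the naturals 1..2n; colour: true = black, false = white. *)
From mathcomp Require Import all_boot all_order all_algebra.
Set Implicit Arguments. Unset Strict Implicit. Unset Printing Implicit Defensive.
Import GRing.Theory.
Local Open Scope ring_scope.

Definition nodes (n : nat) : seq nat := iota 1 (2 * n)%N.

(* number of inversions of a sequence of naturals; for a sequence listing the
   values of a permutation, its parity is the parity of the permutation *)
Definition inversions (s : seq nat) : nat :=
  (\sum_(i < size s) \sum_(j < size s | (i < j)%N) (nth 0 s j < nth 0 s i))%N.

Definition seq_sign (s : seq nat) : int := (-1) ^+ inversions s.

(* A black-white pairing, given as a fixed-point-free involution rho of {1..2n}
   (the blocks are {i, rho i}) pairing each node with a node of the other colour. *)
Definition is_bw_pairing (n : nat) (col : nat -> bool) (rho : nat -> nat) : Prop :=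
  forall i, i \in nodes n ->
    [/\ rho i \in nodes n, rho (rho i) = i & col (rho i) != col i].

Definition planar (n : nat) (rho : nat -> nat) : Prop :=
  forall a b c d, a \in nodes n -> b \in nodes n -> c \in nodes n -> d \in nodes n ->
    (a < b)%N -> (b < c)%N -> (c < d)%N -> rho a = c -> rho b <> d.

Definition blacks (n : nat) (col : nat -> bool) : seq nat := [seq i <- nodes n | col i].
Definition whites (n : nat) (col : nat -> bool) : seq nat := [seq i <- nodes n | ~~ col i].

(* theta(i) = index of rho(b_i) among the whites (0-based) *)
Definition sign_BW (n : nat) (col : nat -> bool) (rho : nat -> nat) : int :=
  seq_sign [seq index (rho b) (whites n col) | b <- blacks n col].

Definition a_bw (col : nat -> bool) (b w : nat) : nat :=
  count (fun m => col m == col m.+1) (iota (minn b w) (maxn b w - minn b w)).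

Definition absdiff (b w : nat) : nat := (maxn b w - minn b w)%N.

Definition sign_bw (col : nat -> bool) (b w : nat) : int :=
  (-1) ^+ ((absdiff b w + a_bw col b w - 1) %/ 2)%N.

Definition next_node (n m : nat) : nat := if m == (2 * n)%N then 1%N else m.+1.

(* first elements n_1 < ... < n_2k of the couples of consecutive same-colour nodes *)
Definition couples (n : nat) (col : nat -> bool) : seq nat :=
  [seq m <- nodes n | col m == col (next_node n m)].

Definition black_couples n col := [seq m <- couples n col | col m].
Definition white_couples n col := [seq m <- couples n col | ~~ col m].

Definition phi (n : nat) (col : nat -> bool) (m : nat) : nat :=
  if col m then
    (if col 1%N then 2 * index m (black_couples n col) + 2
     else 2 * index m (black_couples n col) + 1)%N
  else
    (if col 1%N then 2 * index m (white_couples n col) + 1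
     else 2 * index m (white_couples n col) + 2)%N.

Definition sign_c (n : nat) (col : nat -> bool) : int :=
  seq_sign [seq phi n col m | m <- couples n col].

(* Both sides are signs (-1)^e, so it suffices to compare exponents mod 2.
   Splitting the inversions of (phi(n_1), ..., phi(n_2k)) into black-white pairs
   shows that sign_c is (-1)^(k^2 + C(k + c, 2) + #{black couple before white
   couple}), where k is the number of black (= white) couples and c the colour
   of node 1.  The left side is (-1)^(inv(theta) + sum of the exponents of
   sign(b, w)).
   Induct on n: pair two adjacent nodes i, i+1 of different colours, away from
   the wrap-around if possible, and pair the other 2n-2 nodes by induction.
   Reinserting the block {i, i+1} adds (2 + f) s to the left exponent, where
   s = i-1 (mod 2) is the number of blocks straddling it and f = 1 iff both
   (i-1, i) and (i+1, i+2) are couples.  Deleting the pair changes the couple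
   colour sequence only when f = 1, by removing an adjacent black-white pair,
   which shifts the right exponent by i-1 as well.  Without an interior
   bichromatic pair, balance forces n <= 2. *)

From mathcomp Require Import all_boot all_order all_algebra.
From mathcomp Require Import zify.
Import GRing.Theory.

Set Implicit Arguments. Unset Strict Implicit. Unset Printing Implicit Defensive.

Lemma nth_ltn_sorted (s : seq nat) i j : sorted ltn s -> i < size s -> j < size s ->
  (nth 0 s i < nth 0 s j) = (i < j).
Proof.
move=> ss hi hj; have homo := sorted_ltn_nth ltn_trans 0 ss.
case: (ltngtP i j) => [lij|lji|->]; last by rewrite ltnn.
- exact: homo.
- by apply/negbTE; rewrite -leqNgt ltnW //; apply: homo.
Qed.

Lemma index_ltn_sorted (s : seq nat) x y : sorted ltn s -> x \in s -> y \in s ->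
  (index x s < index y s) = (x < y).
Proof.
move=> ss xs ys.
by rewrite -[in RHS](nth_index 0 xs) -[in RHS](nth_index 0 ys) nth_ltn_sorted // index_mem.
Qed.

Lemma inversions_map_sorted (s : seq nat) (f : nat -> nat) : sorted ltn s ->
  inversions (map f s) = \sum_(x <- s) \sum_(y <- s) ((x < y) && (f y < f x)).
Proof.
move=> ss; rewrite /inversions size_map (big_nth 0) big_mkord.
apply: eq_bigr => i _; rewrite (big_nth 0) big_mkord big_mkcond /=.
apply: eq_bigr => j _; rewrite !(nth_map 0) // nth_ltn_sorted //.
by case: (i < j).
Qed.

Lemma count_sumE (T : Type) (a : pred T) (r : seq T) : count a r = \sum_(x <- r) (a x : nat).
Proof. by elim: r => [|x r IH]; rewrite ?big_nil ?big_cons //= IH. Qed.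

Lemma sum_index_uniq (s : seq nat) (F : nat -> nat) : uniq s ->
  \sum_(x <- s) F (index x s) = \sum_(a < size s) F a.
Proof.
by move=> us; rewrite (big_nth 0) big_mkord; apply: eq_bigr => i _; rewrite index_uniq.
Qed.

Lemma sign_eq_mod2 (a b : nat) : a %% 2 = b %% 2 -> ((-1 : int) ^+ a = (-1) ^+ b)%R.
Proof.
rewrite -(signr_odd _ a) -(signr_odd _ b) !modn2.
by case: (odd a); case: (odd b).
Qed.

(** * The exponent of sign_c *)

Fixpoint bw_pairs (k : seq bool) : nat :=
  if k is b :: l then (if b then count negb l else 0) + bw_pairs l else 0.

Lemma bw_pairs_cat (k1 k2 : seq bool) :
  bw_pairs (k1 ++ k2) = bw_pairs k1 + count id k1 * count negb k2 + bw_pairs k2.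
Proof. by elim: k1 => [|b k1 IH] //=; rewrite IH count_cat; case: b => /=; lia. Qed.

Lemma sum_black_white_ltn (C : seq nat) (col : nat -> bool) : sorted ltn C ->
  \sum_(s <- C | col s) \sum_(u <- C | ~~ col u) (s < u) = bw_pairs (map col C).
Proof.
elim: C => [|c C IH] /=; first by rewrite big_nil.
move=> sC; have sC' := path_sorted sC.
have c_min : all (fun y => c < y) C by apply: (order_path_min ltn_trans).
have tail_sum : \sum_(s <- C | col s) \sum_(u <- c :: C | ~~ col u) (s < u)
       = \sum_(s <- C | col s) \sum_(u <- C | ~~ col u) (s < u).
  rewrite big_seq_cond [RHS]big_seq_cond; apply: eq_bigr => s /andP[sC0 _].
  by rewrite big_cons; case: ifP => // _; rewrite ltnNge ltnW ?(allP c_min).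
rewrite big_cons tail_sum IH //; case: ifP => hc; last by rewrite add0n.
rewrite big_cons hc /=; congr (_ + _).
rewrite count_map -sum1_count big_seq_cond [RHS]big_seq_cond.
by apply: eq_bigr => u /andP[uC _]; rewrite (allP c_min).
Qed.

(* phi of the b-th white couple is smaller than phi of the a-th black couple;
   c is the colour of node 1. *)
Definition white_before (c : bool) (b a : nat) : bool := if c then b <= a else b < a.

Lemma sum_white_before (c : bool) k :
  \sum_(a < k) \sum_(b < k) (white_before c b a : nat) = 'C(k + c, 2).
Proof.
rewrite /white_before; elim: k => [|k IH]; first by rewrite big_ord0 bin_small //; case: c.
rewrite big_ord_recr /=.
rewrite (eq_bigr (fun a : 'I_k => \sum_(b < k) ((if c then b <= a else b < a) : nat))); last first.
  move=> a _; rewrite big_ord_recr /=.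
  have ha := ltn_ord a.
  have -> : (if c then k <= a else k < a) = false by case: (c); lia.
  by rewrite addn0.
rewrite IH big_ord_recr /= (eq_bigr (fun _ => 1)); last first.
  by move=> b _; have hb := ltn_ord b; case: (c); rewrite /= ?hb ?(ltnW hb).
rewrite sum1_card card_ord addSn binS bin1.
by case: (c); rewrite ?leqnn ?ltnn /= ?addn0 ?addn1 ?addnS.
Qed.

(* The exponent of sign_c in terms of the colour sequence kap of the couples and
   the colour c1 of node 1. *)
Definition couple_exponent (kap : seq bool) (c1 : bool) : nat :=
  count id kap * count id kap + 'C(count id kap + c1, 2) + bw_pairs kap.

Lemma couples_sorted n col : sorted ltn (couples n col).
Proof. by apply: sorted_filter; [exact: ltn_trans | exact: iota_ltn_sorted]. Qed.

Lemma couples_uniq n col : uniq (couples n col).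
Proof. exact: filter_uniq (iota_uniq _ _). Qed.

Section CoupleSign.
Variables (n : nat) (col : nat -> bool).
Local Notation C := (couples n col).
Local Notation BC := (black_couples n col).
Local Notation WC := (white_couples n col).
Local Notation phi := (phi n col).

Lemma black_couples_sorted : sorted ltn BC.
Proof. by apply: sorted_filter; [exact: ltn_trans | exact: couples_sorted]. Qed.

Lemma white_couples_sorted : sorted ltn WC.
Proof. by apply: sorted_filter; [exact: ltn_trans | exact: couples_sorted]. Qed.

Lemma phi_black m : col m -> phi m = 2 * index m BC + (if col 1 then 2 else 1).
Proof. by move=> hm; rewrite /phi hm; case: (col 1). Qed.

Lemma phi_white m : ~~ col m -> phi m = 2 * index m WC + (if col 1 then 1 else 2).
Proof. by move=> hm; rewrite /phi (negbTE hm); case: (col 1). Qed.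

Lemma phi_increasing_same_colour x y : x \in C -> y \in C -> col x = col y ->
  x < y -> phi x < phi y.
Proof.
move=> xC yC exy lxy; case: (boolP (col x)) => hx.
- have hy : col y by rewrite -exy.
  have xB : x \in BC by rewrite mem_filter hx.
  have yB : y \in BC by rewrite mem_filter hy.
  rewrite -(index_ltn_sorted black_couples_sorted xB yB) in lxy.
  by rewrite !phi_black //; case: (col 1); lia.
- have hy : ~~ col y by rewrite -exy.
  have xW : x \in WC by rewrite mem_filter hx.
  have yW : y \in WC by rewrite mem_filter hy.
  rewrite -(index_ltn_sorted white_couples_sorted xW yW) in lxy.
  by rewrite !phi_white //; case: (col 1); lia.
Qed.

Definition phi_inversion x y : nat := (x < y) && (phi y < phi x).

Lemma phi_inversion_black_white s u : col s -> ~~ col u ->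
  let wb := white_before (col 1) (index u WC) (index s BC) in
  phi_inversion s u + phi_inversion u s + (s < u) + wb = 1 + 2 * ((s < u) && wb).
Proof.
move=> hs hu /=.
have nsu : s != u by apply/eqP => E; move: hu; rewrite -E hs.
rewrite /phi_inversion /white_before (phi_black hs) (phi_white hu).
set a := index u WC; set b := index s BC.
move: nsu; case: (col 1); case: (ltngtP s u) => //= _ _;
  [case: (ltnP b a) | case: (ltnP b a) | case: (leqP b a) | case: (leqP b a)] => /= hab; lia.
Qed.

Lemma phi_inversion_same_colour x y : x \in C -> y \in C -> col x = col y ->
  phi_inversion x y = 0.
Proof.
move=> xC yC exy; rewrite /phi_inversion; case: (ltnP x y) => //= lxy.
by have := phi_increasing_same_colour xC yC exy lxy; case: ltngtP.
Qed.

Lemma inversions_phi_black_white : inversions [seq phi m | m <- C] =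
  \sum_(s <- C | col s) \sum_(u <- C | ~~ col u) (phi_inversion s u + phi_inversion u s).
Proof.
rewrite inversions_map_sorted ?couples_sorted // (bigID col) /=.
have split_inner x : \sum_(y <- C) phi_inversion x y =
    \sum_(y <- C | col y) phi_inversion x y + \sum_(y <- C | ~~ col y) phi_inversion x y.
  by rewrite (bigID col).
under eq_bigr do rewrite split_inner.
under [X in _ + X]eq_bigr do rewrite split_inner.
rewrite !big_split /=.
have -> : \sum_(x <- C | col x) \sum_(y <- C | col y) phi_inversion x y = 0.
  rewrite big_seq_cond; apply: big1 => x /andP[xC hx].
  rewrite big_seq_cond; apply: big1 => y /andP[yC hy].
  by rewrite phi_inversion_same_colour // hx hy.
have -> : \sum_(x <- C | ~~ col x) \sum_(y <- C | ~~ col y) phi_inversion x y = 0.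
  rewrite big_seq_cond; apply: big1 => x /andP[xC hx].
  rewrite big_seq_cond; apply: big1 => y /andP[yC hy].
  by rewrite phi_inversion_same_colour // (negbTE hx) (negbTE hy).
rewrite add0n addn0 [X in _ + X]exchange_big -big_split /=.
by apply: eq_bigr => s _; rewrite big_split.
Qed.

Lemma sign_c_couple_exponent :
  count id (map col C) = count negb (map col C) ->
  sign_c n col = ((-1) ^+ couple_exponent (map col C) (col 1))%R.
Proof.
move=> balanced.
set X := \sum_(s <- C | col s) \sum_(u <- C | ~~ col u) (s < u).
set W := \sum_(s <- C | col s) \sum_(u <- C | ~~ col u)
           (white_before (col 1) (index u WC) (index s BC) : nat).
set Y := \sum_(s <- C | col s) \sum_(u <- C | ~~ col u)
           ((s < u) && white_before (col 1) (index u WC) (index s BC) : nat).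
have inversions_parity :
    inversions [seq phi m | m <- C] + X + W = count col C * count (predC col) C + 2 * Y.
  rewrite inversions_phi_black_white -!big_split /= big_distrr /= -sum1_count.
  rewrite big_distrl -big_split /= big_seq_cond [RHS]big_seq_cond.
  apply: eq_bigr => s /andP[_ hs].
  rewrite mul1n -sum1_count big_distrr -!big_split /= big_seq_cond [RHS]big_seq_cond.
  by apply: eq_bigr => u /andP[_ hu]; rewrite phi_inversion_black_white // muln1.
have k_black : count col C = count id (map col C) by rewrite count_map.
have k_white : count (predC col) C = count id (map col C) by rewrite balanced count_map.
have W_binomial : W = 'C(count id (map col C) + col 1, 2).
  have uBC : uniq BC by rewrite filter_uniq ?couples_uniq.
  have uWC : uniq WC by rewrite filter_uniq ?couples_uniq.
  rewrite /W -big_filter -/BC.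
  rewrite (eq_bigr (fun s => \sum_(b < size WC) white_before (col 1) b (index s BC))); last first.
    move=> s _; rewrite -big_filter -/WC.
    by rewrite (sum_index_uniq (fun b => white_before (col 1) b (index s BC))).
  rewrite (sum_index_uniq (fun a => \sum_(b < size WC) white_before (col 1) b a)) //.
  by rewrite !size_filter k_black k_white sum_white_before.
have X_bw : X = bw_pairs (map col C) by rewrite /X sum_black_white_ltn ?couples_sorted.
rewrite /sign_c /seq_sign; apply: sign_eq_mod2.
rewrite /couple_exponent -W_binomial -X_bw.
move: inversions_parity; rewrite k_black k_white; lia.
Qed.

End CoupleSign.

Lemma sum_next_node n (F : nat -> nat) :
  \sum_(m <- nodes n) F (next_node n m) = \sum_(m <- nodes n) F m.
Proof.
case: n => [|n]; first by rewrite /nodes !big_nil.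
have [k ek] : exists k, k = (2 * n).+1 by eexists.
rewrite /nodes (_ : 2 * n.+1 = k + 1); last by lia.
rewrite {1}iotaD big_cat big_seq1.
have -> : next_node n.+1 (1 + k) = 1 by rewrite /next_node ifT //; apply/eqP; lia.
have -> : \sum_(m <- iota 1 k) F (next_node n.+1 m) = \sum_(m <- iota 1 k) F m.+1.
  rewrite big_seq [RHS]big_seq; apply: eq_bigr => m; rewrite mem_iota => hm.
  by rewrite /next_node ifF //; apply/eqP; lia.
rewrite (_ : iota 1 (k + 1) = 1 :: map (addn 1) (iota 1 k)); last by rewrite addn1 -iotaDl.
by rewrite big_cons big_map addnC.
Qed.

(* Around the cycle, black nodes are entered as often as they are left. *)
Lemma couples_balanced n col : count col (nodes n) = n ->
  count id (map col (couples n col)) = count negb (map col (couples n col)).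
Proof.
move=> hcol; rewrite !count_map /couples !count_filter !count_sumE.
set nx := next_node n.
pose S (p : bool -> bool -> bool) := \sum_(m <- nodes n) (p (col m) (col (nx m)) : nat).
have out_black : n = S (fun a b => a && b) + S (fun a b => a && ~~ b).
  rewrite -{1}hcol count_sumE -big_split.
  by apply: eq_bigr => m _; case: (col m); case: (col (nx m)).
have in_black : n = S (fun a b => a && b) + S (fun a b => ~~ a && b).
  rewrite -{1}hcol count_sumE -(sum_next_node n (fun m => col m : nat)) -big_split.
  by apply: eq_bigr => m _; case: (col m); case: (col (nx m)).
have total : 2 * n = S (fun a b => a && b) + S (fun a b => a && ~~ b)
                     + S (fun a b => ~~ a && b) + S (fun a b => ~~ a && ~~ b).
  rewrite -[in LHS](size_iota 1 (2 * n)) -count_predT count_sumE -!big_split.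
  by apply: eq_bigr => m _; case: (col m); case: (col (nx m)).
have bb : \sum_(m <- nodes n) predI (preim col id) (fun m => col m == col (nx m)) m
          = S (fun a b => a && b).
  by rewrite /S; apply: eq_bigr => m _ /=; case: (col m); case: (col (nx m)).
have ww : \sum_(m <- nodes n) predI (preim col negb) (fun m => col m == col (nx m)) m
          = S (fun a b => ~~ a && ~~ b).
  by rewrite /S; apply: eq_bigr => m _ /=; case: (col m); case: (col (nx m)).
rewrite bb ww; lia.
Qed.

Lemma couple_exponent_cancel (c1 x : bool) (k1 k2 : seq bool) :
  count id (k1 ++ x :: ~~ x :: k2) = count negb (k1 ++ x :: ~~ x :: k2) ->
  couple_exponent (k1 ++ x :: ~~ x :: k2) c1 =
  couple_exponent (k1 ++ k2) c1 + size k1 + 1 + (c1 (+) x) %[mod 2].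
Proof.
move=> balanced; rewrite /couple_exponent !bw_pairs_cat.
have -> : count id (k1 ++ x :: ~~ x :: k2) = (count id (k1 ++ k2)).+1.
  by rewrite !count_cat /=; case: (x) => /=; lia.
rewrite addSn binS bin1.
have size_k1 : size k1 = count id k1 + count negb k1 by rewrite -(count_predC id).
move: balanced; rewrite !count_cat /=.
by case: x; case: c1 => /= balanced; rewrite ?addn0 ?add0n; nia.
Qed.

(** * Deleting a bichromatic pair of adjacent nodes *)

Definition skip_pair (i m : nat) : nat := if m < i then m else m.+2.
Definition delete_pair (i : nat) (col : nat -> bool) : nat -> bool := col \o skip_pair i.

(* Along 1, ..., j+1 the colour changes j - count times, an odd number of times
   iff the endpoints differ. *)
Lemma count_same_colour_mod2 (col : nat -> bool) j :
  count (fun m => col m == col m.+1) (iota 1 j) + (col 1 != col j.+1) = j %[mod 2].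
Proof.
elim: j => [|j IH]; first by rewrite /= eqxx.
rewrite -[j.+1]addn1 iotaD count_cat /= add1n addn1 addn0.
by move: IH; case: (col 1); case: (col j.+1); case: (col j.+2) => /=; lia.
Qed.

Section DeleteCouples.
Variables (n' j r : nat) (col : nat -> bool).
Hypothesis size_split : 2 * n'.+1 = j + 3 + r.
Hypothesis r_pos : 0 < r.

Local Notation n := n'.+1.
Local Notation col' := (delete_pair j.+2 col).
Local Notation K1 := (map col [seq m <- iota 1 j | col m == col m.+1]).
Local Notation K2 := (map col [seq m <- iota (j + 4) r | col m == col (next_node n m)]).

Lemma nodes_split_old : nodes n = iota 1 j ++ [:: j.+1; j.+2; j.+3] ++ iota (j + 4) r.
Proof.
rewrite /nodes size_split -!addnA iotaD; congr (_ ++ _).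
by rewrite iotaD; congr (_ ++ _); f_equal; lia.
Qed.

Lemma nodes_split_new : nodes n' = iota 1 j ++ [:: j.+1] ++ iota (j + 2) r.
Proof.
rewrite /nodes (_ : 2 * n' = j + (1 + r)); last by lia.
by rewrite iotaD; congr (_ ++ _); rewrite iotaD; congr (_ ++ _); f_equal; lia.
Qed.

Lemma couple_colours_old : map col (couples n col) =
  K1 ++ (if col j.+1 == col j.+2 then [:: col j.+1] else [::]) ++
        (if col j.+2 == col j.+3 then [:: col j.+2] else [::]) ++
        (if col j.+3 == col j.+4 then [:: col j.+3] else [::]) ++ K2.
Proof.
rewrite /couples nodes_split_old !filter_cat !map_cat; congr (_ ++ _).
  congr map; apply: eq_in_filter => m; rewrite mem_iota => hm.
  by rewrite /next_node ifF //; apply/eqP; lia.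
have e1 : next_node n j.+1 = j.+2 by rewrite /next_node ifF //; apply/eqP; lia.
have e2 : next_node n j.+2 = j.+3 by rewrite /next_node ifF //; apply/eqP; lia.
have e3 : next_node n j.+3 = j.+4 by rewrite /next_node ifF //; apply/eqP; lia.
rewrite /= e1 e2 e3.
by case: (col j.+1 == col j.+2); case: (col j.+2 == col j.+3); case: (col j.+3 == col j.+4).
Qed.

Lemma couple_colours_new : map col' (couples n' col') =
  K1 ++ (if col j.+1 == col j.+4 then [:: col j.+1] else [::]) ++ K2.
Proof.
rewrite /couples nodes_split_new !filter_cat !map_cat; congr (_ ++ _).
  have -> : [seq m <- iota 1 j | col' m == col' (next_node n' m)] =
            [seq m <- iota 1 j | col m == col m.+1].
    apply: eq_in_filter => m; rewrite mem_iota => hm.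
    rewrite /next_node ifF; last by apply/eqP; lia.
    by rewrite /delete_pair /skip_pair /= !ifT //; lia.
  apply/eq_in_map => m; rewrite mem_filter mem_iota => /andP[_ hm].
  by rewrite /delete_pair /skip_pair /= ifT //; lia.
congr (_ ++ _).
  have e : next_node n' j.+1 = j.+2 by rewrite /next_node ifF //; apply/eqP; lia.
  have c1 : col' j.+1 = col j.+1 by rewrite /delete_pair /skip_pair /= ifT.
  have c2 : col' j.+2 = col j.+4 by rewrite /delete_pair /skip_pair /= ltnn.
  by rewrite /= e c1 c2; case: ifP => //= _; rewrite c1.
rewrite (_ : iota (j + 4) r = map (addn 2) (iota (j + 2) r)); last first.
  by rewrite -iotaDl; f_equal; lia.
rewrite filter_map -map_comp.
have -> : [seq m <- iota (j + 2) r | col' m == col' (next_node n' m)] =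
          [seq m <- iota (j + 2) r | preim (addn 2) (fun m => col m == col (next_node n m)) m].
  apply: eq_in_filter => m; rewrite mem_iota => hm /=.
  rewrite /delete_pair /skip_pair /= ifF; last by lia.
  congr (_ == _); rewrite /next_node; case: eqP => hm2.
    by rewrite ifT //; apply/eqP; lia.
  rewrite ifF; last by lia.
  by rewrite ifF; [congr col; lia | apply/eqP; lia].
apply/eq_in_map => m; rewrite mem_filter mem_iota => /andP[_ hm].
by rewrite /delete_pair /skip_pair /= ifF; [congr col; lia | lia].
Qed.

(* Deleting the bichromatic interior pair (j+2, j+3) leaves the couple colours
   unchanged unless both neighbouring pairs are couples; then it removes an
   adjacent black-white pair from them. *)
Lemma couple_exponent_delete_pair : col j.+2 != col j.+3 -> count col (nodes n) = n ->
  couple_exponent (map col (couples n col)) (col 1) =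
  couple_exponent (map col' (couples n' col')) (col' 1)
    + j.+1 * ((col j.+1 == col j.+2) && (col j.+3 == col j.+4)) %[mod 2].
Proof.
move=> hneq hcol.
have balanced := couples_balanced hcol.
have c1 : col' 1 = col 1 by [].
have hz : col j.+3 = ~~ col j.+2 by move: hneq; case: (col j.+2); case: (col j.+3).
have hpp := count_same_colour_mod2 col j.
have hs : size K1 = count (fun m => col m == col m.+1) (iota 1 j) by rewrite size_map size_filter.
rewrite couple_colours_old couple_colours_new c1 hz; rewrite couple_colours_old hz in balanced.
move: balanced hpp hs.
case: (col j.+1); case: (col j.+2); case: (col j.+4) => /= balanced hpp hs;
  rewrite ?muln0 ?addn0 //.
- rewrite (couple_exponent_cancel (col 1) (x := true) balanced) /=.
  by move: hpp; rewrite -hs; case: (col 1) => /=; lia.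
- rewrite (couple_exponent_cancel (col 1) (x := false) balanced) /=.
  by move: hpp; rewrite -hs; case: (col 1) => /=; lia.
Qed.

End DeleteCouples.

(** * The exponent of the pairing sign *)

Definition sign_bw_exponent (col : nat -> bool) (b w : nat) : nat :=
  (absdiff b w + a_bw col b w - 1) %/ 2.

Definition black_inversions n (col : nat -> bool) (rho : nat -> nat) : nat :=
  \sum_(b <- nodes n | col b) \sum_(b' <- nodes n | col b') ((b < b') && (rho b' < rho b)).

Definition pairing_exponent n (col : nat -> bool) (rho : nat -> nat) : nat :=
  black_inversions n col rho + \sum_(b <- nodes n | col b) sign_bw_exponent col b (rho b).

Lemma pairing_signE n col rho : is_bw_pairing n col rho ->
  (sign_BW n col rho * \prod_(b <- nodes n | col b) sign_bw col b (rho b)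
   = (-1) ^+ pairing_exponent n col rho)%R.
Proof.
move=> hp; rewrite exprD /sign_bw prodrXr; congr (_ * _)%R.
have sorted_nodes : sorted ltn (nodes n) by exact: iota_ltn_sorted.
have sW : sorted ltn (whites n col) by apply: sorted_filter => //; exact: ltn_trans.
rewrite /sign_BW /seq_sign inversions_map_sorted; last first.
  by apply: sorted_filter => //; exact: ltn_trans.
rewrite /black_inversions /blacks !big_filter; congr (_ ^+ _)%R.
rewrite big_seq_cond [RHS]big_seq_cond; apply: eq_bigr => x /andP[xN hx].
rewrite big_filter big_seq_cond [RHS]big_seq_cond; apply: eq_bigr => y /andP[yN hy].
have white_image u : u \in nodes n -> col u -> rho u \in whites n col.
  move=> uN hu; have [ruN _ cu] := hp u uN.
  by rewrite mem_filter ruN andbT; move: cu; rewrite hu; case: (col (rho u)).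
by rewrite index_ltn_sorted // white_image.
Qed.

Lemma sum_involution (s : seq nat) (rho : nat -> nat) (F : nat -> nat) : uniq s ->
  (forall u, u \in s -> rho u \in s /\ rho (rho u) = u) ->
  \sum_(u <- s) F (rho u) = \sum_(u <- s) F u.
Proof.
move=> us inv; rewrite -(big_map rho predT F); apply/perm_big/uniq_perm => //.
- rewrite map_inj_in_uniq // => a b aN bN e.
  by rewrite -(proj2 (inv a aN)) e (proj2 (inv b bN)).
- move=> x; apply/mapP/idP => [[y yN ->] | xN]; first exact: (proj1 (inv y yN)).
  by exists (rho x); [exact: (proj1 (inv x xN)) | rewrite (proj2 (inv x xN))].
Qed.

Lemma count_nodes_ltn n i : 0 < i -> i <= (2 * n).+1 -> count (fun u => u < i) (nodes n) = i.-1.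
Proof.
move=> i_pos i_le; rewrite /nodes.
have [k ek] : exists k, i = k.+1 by exists i.-1; lia.
rewrite (_ : 2 * n = k + (2 * n - k)); last by lia.
rewrite iotaD count_cat.
have -> : count (fun u => u < i) (iota 1 k) = k.
  rewrite (eq_in_count (a2 := predT)) ?count_predT ?size_iota // => m.
  by rewrite mem_iota => hm /=; lia.
have -> : count (fun u => u < i) (iota (1 + k) (2 * n - k)) = 0.
  apply/eqP; rewrite -leqn0 leqNgt -has_count; apply/hasPn => m.
  by rewrite mem_iota => hm /=; lia.
by rewrite ek addn0.
Qed.

Definition straddling n (col : nat -> bool) (rho : nat -> nat) (i : nat) : nat :=
  \sum_(u <- nodes n | col u) ((u < i) != (rho u < i)).

Section Straddling.
Variables (n : nat) (col : nat -> bool) (rho : nat -> nat) (i : nat).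
Hypothesis pairing : is_bw_pairing n col rho.

Let inv u : u \in nodes n -> rho u \in nodes n /\ rho (rho u) = u.
Proof. by move=> uN; have [? ? _] := pairing uN. Qed.

Let sum_rho (F : nat -> nat) : \sum_(u <- nodes n) F (rho u) = \sum_(u <- nodes n) F u.
Proof. exact/sum_involution/inv/iota_uniq. Qed.

Local Notation left_out u := ((u < i) && ~~ (rho u < i)).
Local Notation both_left u := ((u < i) && (rho u < i)).

Lemma straddling_count : straddling n col rho i = \sum_(u <- nodes n) (left_out u : nat).
Proof.
set t := fun u => (u < i) != (rho u < i).
have t_rho u : u \in nodes n -> t (rho u) = t u.
  by move=> uN; rewrite /t (proj2 (inv uN)); case: (u < i); case: (rho u < i).
have double_straddling : \sum_(u <- nodes n) (t u : nat) = 2 * straddling n col rho i.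
  rewrite /straddling (bigID col) /= mul2n -addnn; congr (_ + _).
  rewrite big_mkcond [RHS]big_mkcond /= -(sum_rho (fun u => if ~~ col u then t u : nat else 0)).
  rewrite big_seq [RHS]big_seq; apply: eq_bigr => u uN.
  have [_ _ cu] := pairing uN.
  by rewrite t_rho //; move: cu; case: (col u); case: (col (rho u)).
have double_left_out : \sum_(u <- nodes n) (t u : nat) = 2 * \sum_(u <- nodes n) (left_out u : nat).
  rewrite mul2n -addnn -{2}(sum_rho (fun u => left_out u : nat)) -big_split.
  rewrite big_seq [RHS]big_seq; apply: eq_bigr => u uN /=.
  by rewrite /t (proj2 (inv uN)); case: (u < i); case: (rho u < i).
lia.
Qed.

Lemma both_left_even : \sum_(u <- nodes n) (both_left u : nat) = 0 %[mod 2].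
Proof.
set below := \sum_(u <- nodes n) (both_left u && (u < rho u) : nat).
have -> : \sum_(u <- nodes n) (both_left u : nat) = below + below.
  rewrite {2}/below -(sum_rho (fun u => both_left u && (u < rho u) : nat)) -big_split.
  rewrite big_seq [RHS]big_seq; apply: eq_bigr => u uN /=.
  have [_ _ cu] := pairing uN.
  have nu : rho u != u by apply/eqP => e; move: cu; rewrite e eqxx.
  rewrite (proj2 (inv uN)).
  by move: nu; case: (ltngtP u (rho u)) => [|| ->]; rewrite ?eqxx //;
    case: (u < i); case: (rho u < i).
by rewrite addnn -mul2n modnMr.
Qed.

(* The nodes left of i are exactly i-1; those not straddling come in pairs. *)
Lemma straddling_mod2 : 0 < i -> i <= (2 * n).+1 -> straddling n col rho i = i.-1 %[mod 2].
Proof.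
move=> i_pos i_le; rewrite straddling_count -(count_nodes_ltn i_pos i_le) count_sumE.
have -> : \sum_(u <- nodes n) ((u < i) : nat) =
    \sum_(u <- nodes n) (left_out u : nat) + \sum_(u <- nodes n) (both_left u : nat).
  by rewrite -big_split; apply: eq_bigr => u _ /=; case: (u < i); case: (rho u < i).
by rewrite -modnDmr both_left_even addn0.
Qed.

End Straddling.

(** * Reinserting the deleted pair as a block *)

Definition unskip_pair (i m : nat) : nat := if m < i then m else m - 2.

Lemma skip_pair_ltn i a b : (skip_pair i a < skip_pair i b) = (a < b).
Proof.
by rewrite /skip_pair; case: (ltnP a i); case: (ltnP b i) => /= *; apply/idP/idP => *; lia.
Qed.

Lemma skip_pair_ltn_i i x : (skip_pair i x < i) = (x < i).
Proof. by rewrite /skip_pair; case: (ltnP x i) => h; apply/idP/idP => *; lia. Qed.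

Lemma skip_pair_ltn_Si i x : (skip_pair i x < i.+1) = (x < i).
Proof. by rewrite /skip_pair; case: (ltnP x i) => h; apply/idP/idP => *; lia. Qed.

Lemma i_ltn_skip_pair i x : (i < skip_pair i x) = (i <= x).
Proof. by rewrite /skip_pair; case: (ltnP x i) => h; apply/idP/idP => *; lia. Qed.

Lemma Si_ltn_skip_pair i x : (i.+1 < skip_pair i x) = (i <= x).
Proof. by rewrite /skip_pair; case: (ltnP x i) => h; apply/idP/idP => *; lia. Qed.

Lemma skip_pair_neq_i i x : skip_pair i x != i.
Proof. by rewrite /skip_pair; case: (ltnP x i) => h; apply/eqP; lia. Qed.

Lemma skip_pair_neq_Si i x : skip_pair i x != i.+1.
Proof. by rewrite /skip_pair; case: (ltnP x i) => h; apply/eqP; lia. Qed.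

Lemma skip_pairK i : cancel (skip_pair i) (unskip_pair i).
Proof.
move=> x; rewrite /unskip_pair /skip_pair; case: (ltnP x i) => h; first by rewrite h.
by rewrite ifF; [lia | apply/negbTE; lia].
Qed.

Lemma unskip_pairK i m : m != i -> m != i.+1 -> skip_pair i (unskip_pair i m) = m.
Proof.
move=> /eqP h1 /eqP h2; rewrite /unskip_pair /skip_pair; case: (ltnP m i) => h; first by rewrite h.
by rewrite ifF; [lia | apply/negbTE; lia].
Qed.

Definition same_colour_count (col : nat -> bool) (lo hi : nat) : nat :=
  count (fun m => col m == col m.+1) (iota lo (hi - lo)).

Definition flanked_by_couples (col : nat -> bool) (i : nat) : bool :=
  (col i.-1 == col i) && (col i.+1 == col i.+2).

Lemma same_colour_count_skip i col lo hi : lo <= hi -> col i != col i.+1 ->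
  same_colour_count col (skip_pair i lo) (skip_pair i hi) =
  same_colour_count (delete_pair i col) lo hi
    + 2 * (flanked_by_couples col i && ((lo < i) && (i <= hi))).
Proof.
move=> lo_hi hneq; rewrite /same_colour_count /delete_pair /=.
case: (ltnP hi i) => hi_i.
  rewrite /skip_pair !ifT ?andbF ?muln0 ?addn0; try lia.
  by apply: eq_in_count => m; rewrite mem_iota => hm /=; rewrite !ifT //; lia.
case: (ltnP lo i) => lo_i; last first.
  rewrite /skip_pair !ifF ?andbF ?muln0 ?addn0; try lia.
  rewrite (_ : hi.+2 - lo.+2 = hi - lo) //.
  rewrite (_ : iota lo.+2 _ = map (addn 2) (iota lo (hi - lo))); last by rewrite -iotaDl.
  rewrite count_map.
  by apply: eq_in_count => m; rewrite mem_iota => hm /=; rewrite !ifF ?add2n //; lia.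
have [k ek] : exists k, i = k.+1 by exists i.-1; lia.
rewrite /skip_pair ifT // ifF; last by lia.
rewrite !andbT (_ : hi.+2 - lo = (k - lo) + (3 + (hi - i))); last by lia.
rewrite (_ : hi - lo = (k - lo) + (1 + (hi - i))); last by lia.
rewrite !iotaD !count_cat (_ : lo + (k - lo) = k); last by lia.
have -> : count (fun m => col (if m < i then m else m.+2) == col (if m.+1 < i then m.+1 else m.+3))
    (iota lo (k - lo)) = count (fun m => col m == col m.+1) (iota lo (k - lo)).
  by apply: eq_in_count => m; rewrite mem_iota => hm /=; rewrite !ifT //; lia.
rewrite (_ : iota (k + 3) (hi - i) = map (addn 2) (iota (k + 1) (hi - i))); last first.
  by rewrite -iotaDl; f_equal; lia.
rewrite count_map.
have -> : count (fun m => col (if m < i then m else m.+2) == col (if m.+1 < i then m.+1 else m.+3))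
    (iota (k + 1) (hi - i)) =
    count (preim (addn 2) (fun m => col m == col m.+1)) (iota (k + 1) (hi - i)).
  by apply: eq_in_count => m; rewrite mem_iota => hm /=; rewrite !ifF ?add2n //; lia.
rewrite /= !addn0 ek /flanked_by_couples /= ltnSn ltnn.
rewrite ek in hneq.
by move: hneq; case: (col k); case: (col k.+1); case: (col k.+2); case: (col k.+3) => //= _; lia.
Qed.

Lemma sign_bw_exponentC col b w : sign_bw_exponent col b w = sign_bw_exponent col w b.
Proof. by rewrite /sign_bw_exponent /absdiff /a_bw minnC maxnC. Qed.

Lemma sign_bw_exponentE col b w : b < w ->
  sign_bw_exponent col b w = (w - b + same_colour_count col b w - 1) %/ 2.
Proof.
move=> b_w; rewrite /sign_bw_exponent /absdiff /a_bw /same_colour_count.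
by rewrite (minn_idPl (ltnW b_w)) (maxn_idPr (ltnW b_w)).
Qed.

(* Reinserting a bichromatic pair at i lengthens [b, w] by 2 if it lies inside,
   and adds two couples when i is flanked by couples: the exponent grows by 1 or 2. *)
Lemma sign_bw_exponent_skip i col b w : b != w -> col i != col i.+1 ->
  sign_bw_exponent col (skip_pair i b) (skip_pair i w) =
  sign_bw_exponent (delete_pair i col) b w
    + ((b < i) != (w < i)) * (1 + flanked_by_couples col i).
Proof.
wlog b_w : b w / b < w.
  move=> H b_neq_w hneq; case: (ltngtP b w) => b_w; first exact: H.
  - have := H w b b_w; rewrite eq_sym => /(_ b_neq_w hneq).
    rewrite sign_bw_exponentC => ->; rewrite sign_bw_exponentC.
    by case: (b < i); case: (w < i).
  - by move: b_neq_w; rewrite b_w eqxx.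
move=> _ hneq.
have skip_b_w : skip_pair i b < skip_pair i w by rewrite skip_pair_ltn.
rewrite !sign_bw_exponentE // same_colour_count_skip //; last by lia.
rewrite (_ : skip_pair i w - skip_pair i b = w - b + 2 * ((b < i) && (i <= w))); last first.
  by rewrite /skip_pair; case: (ltnP b i); case: (ltnP w i) => /= *; lia.
rewrite (_ : ((b < i) != (w < i)) = ((b < i) && (i <= w))); last first.
  by case: (ltnP b i); case: (ltnP w i) => /= *; lia.
case: ((b < i) && (i <= w)); case: (flanked_by_couples col i) => /=;
  rewrite ?muln0 ?muln1 ?addn0; lia.
Qed.

Definition insert_pair (i : nat) (rho' : nat -> nat) (m : nat) : nat :=
  if m == i then i.+1 else if m == i.+1 then i else skip_pair i (rho' (unskip_pair i m)).

Lemma insert_pair_skip i rho' x : insert_pair i rho' (skip_pair i x) = skip_pair i (rho' x).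
Proof.
by rewrite /insert_pair (negbTE (skip_pair_neq_i i x)) (negbTE (skip_pair_neq_Si i x)) skip_pairK.
Qed.

Lemma insert_pair_i i rho' : insert_pair i rho' i = i.+1.
Proof. by rewrite /insert_pair eqxx. Qed.

Lemma insert_pair_Si i rho' : insert_pair i rho' i.+1 = i.
Proof. by rewrite /insert_pair ifF ?eqxx // gtn_eqF. Qed.

Lemma sum_nodes_skip_pair n' i (F : nat -> nat) : 0 < i -> i <= (2 * n').+1 ->
  \sum_(m <- nodes n'.+1) F m = \sum_(m <- nodes n') F (skip_pair i m) + F i + F i.+1.
Proof.
move=> i_pos i_le.
have [k ek] : exists k, i = k.+1 by exists i.-1; lia.
have [r er] : exists r, 2 * n' = k + r by exists (2 * n' - k); lia.
rewrite /nodes er (_ : 2 * n'.+1 = k + (2 + r)); last by lia.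
rewrite !iotaD !big_cat /= !big_cons big_nil addn0.
have -> : \sum_(m <- iota 1 k) F (skip_pair i m) = \sum_(m <- iota 1 k) F m.
  rewrite big_seq [RHS]big_seq; apply: eq_bigr => m; rewrite mem_iota => hm.
  by rewrite /skip_pair ifT //; lia.
have -> : \sum_(m <- iota (1 + k) r) F (skip_pair i m) = \sum_(m <- iota (1 + k + 2) r) F m.
  rewrite (_ : iota (1 + k + 2) r = map (addn 2) (iota (1 + k) r)); last first.
    by rewrite -iotaDl; f_equal; lia.
  rewrite big_map big_seq [RHS]big_seq; apply: eq_bigr => m; rewrite mem_iota => hm.
  by rewrite /skip_pair ifF; [congr F; lia | lia].
by rewrite ek add1n; lia.
Qed.

Lemma skip_pair_nodes n' i u : u \in nodes n' -> skip_pair i u \in nodes n'.+1.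
Proof. by rewrite /nodes !mem_iota /skip_pair => hu; case: (ltnP u i) => h; lia. Qed.

Lemma unskip_pair_nodes n' i m : 0 < i -> i <= (2 * n').+1 ->
  m \in nodes n'.+1 -> m != i -> m != i.+1 -> unskip_pair i m \in nodes n'.
Proof.
rewrite /nodes !mem_iota /unskip_pair => i_pos i_le hm /eqP h1 /eqP h2.
by case: (ltnP m i) => h; lia.
Qed.

(* The new block {i, i+1} joins adjacent nodes, so it crosses nothing; the other
   blocks cross as in rho', since skip_pair is monotone. *)
Lemma insert_pair_planar n' i rho' : 0 < i -> i <= (2 * n').+1 ->
  planar n' rho' -> planar n'.+1 (insert_pair i rho').
Proof.
move=> i_pos i_le planar' a b c d aN bN cN dN ab bc cd ac bd.
have new_block x : (x == i) || (x == i.+1) ->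
    (insert_pair i rho' x == i) || (insert_pair i rho' x == i.+1).
  by move=> /orP[/eqP->|/eqP->]; rewrite ?insert_pair_i ?insert_pair_Si eqxx ?orbT.
have old_block x : x != i -> x != i.+1 ->
    (insert_pair i rho' x != i) && (insert_pair i rho' x != i.+1).
  move=> h1 h2.
  by rewrite -(unskip_pairK h1 h2) insert_pair_skip skip_pair_neq_i skip_pair_neq_Si.
case: (boolP ((a == i) || (a == i.+1))) => ha.
  by have := new_block a ha; rewrite ac; move: ha => /orP[] /eqP ? /orP[] /eqP ?; lia.
case: (boolP ((b == i) || (b == i.+1))) => hb.
  by have := new_block b hb; rewrite bd; move: hb => /orP[] /eqP ? /orP[] /eqP ?; lia.
move: ha hb; rewrite !negb_or => /andP[ha1 ha2] /andP[hb1 hb2].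
have /andP[hc1 hc2] := old_block a ha1 ha2; rewrite ac in hc1 hc2.
have /andP[hd1 hd2] := old_block b hb1 hb2; rewrite bd in hd1 hd2.
move: ac bd ab bc cd.
rewrite -(unskip_pairK ha1 ha2) -(unskip_pairK hb1 hb2) -(unskip_pairK hc1 hc2).
rewrite -(unskip_pairK hd1 hd2) !insert_pair_skip => /(can_inj (skip_pairK i)) ac.
move=> /(can_inj (skip_pairK i)) bd; rewrite !skip_pair_ltn => ab bc cd.
by apply: (planar' _ _ _ _ _ _ _ _ ab bc cd ac bd); exact: unskip_pair_nodes.
Qed.

Section InsertPair.
Variables (n' i : nat) (col : nat -> bool) (rho' : nat -> nat).
Hypothesis i_pos : 0 < i.
Hypothesis i_le : i <= (2 * n').+1.
Hypothesis bichromatic : col i != col i.+1.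

Local Notation n := n'.+1.
Local Notation col' := (delete_pair i col).
Local Notation rho := (insert_pair i rho').

Lemma i_in_nodes : i \in nodes n.
Proof. by rewrite /nodes mem_iota; lia. Qed.

Lemma Si_in_nodes : i.+1 \in nodes n.
Proof. by rewrite /nodes mem_iota; lia. Qed.

Lemma col_Si : col i.+1 = ~~ col i.
Proof. by move: bichromatic; case: (col i); case: (col i.+1). Qed.

Lemma insert_pair_bw : is_bw_pairing n' col' rho' -> is_bw_pairing n col rho.
Proof.
move=> pairing m mN.
case: (eqVneq m i) => [->|m_i].
  by rewrite insert_pair_i insert_pair_Si Si_in_nodes col_Si; case: (col i).
case: (eqVneq m i.+1) => [->|m_Si].
  by rewrite insert_pair_Si insert_pair_i i_in_nodes col_Si; case: (col i).
have [r1 r2 r3] := pairing _ (unskip_pair_nodes i_pos i_le mN m_i m_Si).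
rewrite -(unskip_pairK m_i m_Si) !insert_pair_skip.
by split; [exact: skip_pair_nodes | rewrite r2 | exact: r3].
Qed.

Lemma count_delete_pair : count col (nodes n) = n -> count col' (nodes n') = n'.
Proof.
rewrite !count_sumE (sum_nodes_skip_pair (fun m => (col m : nat)) i_pos i_le) col_Si.
by rewrite /delete_pair /=; case: (col i) => /=; lia.
Qed.

Lemma sum_black_skip_pair (F : nat -> nat) :
  \sum_(b <- nodes n | col b) F b =
  \sum_(m <- nodes n' | col' m) F (skip_pair i m) + (if col i then F i else 0)
    + (if col i.+1 then F i.+1 else 0).
Proof.
by rewrite big_mkcond (sum_nodes_skip_pair (fun b => if col b then F b else 0) i_pos i_le)
  [in RHS]big_mkcond.
Qed.

Lemma black_inversions_insert_pair :
  black_inversions n col rho = black_inversions n' col' rho' + straddling n' col' rho' i.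
Proof.
set T := fun b b' => ((b < b') && (rho b' < rho b) : nat).
have old_old m m' : T (skip_pair i m) (skip_pair i m') = ((m < m') && (rho' m' < rho' m) : nat).
  by rewrite /T !insert_pair_skip !skip_pair_ltn.
have old_new m : (if col i then T (skip_pair i m) i else 0)
    + (if col i.+1 then T (skip_pair i m) i.+1 else 0) = ((m < i) && (i <= rho' m) : nat).
  rewrite col_Si /T insert_pair_skip insert_pair_i insert_pair_Si.
  rewrite skip_pair_ltn_i skip_pair_ltn_Si Si_ltn_skip_pair i_ltn_skip_pair.
  by case: (col i); rewrite /= ?addn0.
have new_old : (if col i then \sum_(b' <- nodes n | col b') T i b' else 0)
    + (if col i.+1 then \sum_(b' <- nodes n | col b') T i.+1 b' else 0)
    = \sum_(m <- nodes n' | col' m) ((i <= m) && (rho' m < i) : nat).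
  rewrite !sum_black_skip_pair col_Si /T insert_pair_i insert_pair_Si ltnn.
  case: (col i) => /=; rewrite ?addn0 ?add0n.
  - by apply: eq_bigr => m _; rewrite insert_pair_skip i_ltn_skip_pair skip_pair_ltn_Si.
  - rewrite /= ltnn /= addn0; apply: eq_bigr => m _.
    by rewrite insert_pair_skip Si_ltn_skip_pair skip_pair_ltn_i.
have -> : black_inversions n col rho =
  \sum_(b <- nodes n | col b) \sum_(b' <- nodes n | col b') T b b' by [].
rewrite sum_black_skip_pair -addnA new_old.
rewrite (eq_bigr (fun m =>
    \sum_(m' <- nodes n' | col' m') ((m < m') && (rho' m' < rho' m) : nat)
    + ((m < i) && (i <= rho' m) : nat))); last first.
  move=> m _; rewrite sum_black_skip_pair -addnA old_new; congr (_ + _).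
  by apply: eq_bigr => m' _; rewrite old_old.
rewrite big_split /= -addnA; congr (_ + _).
rewrite /straddling -big_split /=; apply: eq_bigr => m _.
by case: (ltnP m i); case: (ltnP (rho' m) i).
Qed.

Lemma sign_bw_exponents_insert_pair : is_bw_pairing n' col' rho' ->
  \sum_(b <- nodes n | col b) sign_bw_exponent col b (rho b) =
  \sum_(m <- nodes n' | col' m) sign_bw_exponent col' m (rho' m)
    + straddling n' col' rho' i * (1 + flanked_by_couples col i).
Proof.
move=> pairing.
rewrite sum_black_skip_pair col_Si insert_pair_i insert_pair_Si.
have adjacent : sign_bw_exponent col i i.+1 = 0.
  rewrite sign_bw_exponentE // /same_colour_count (_ : i.+1 - i = 1); last by lia.
  by rewrite /= (negbTE bichromatic).
rewrite adjacent sign_bw_exponentC adjacent.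
rewrite /straddling big_distrl /= !if_same !addn0 -big_split /=.
rewrite big_seq_cond [RHS]big_seq_cond; apply: eq_bigr => m /andP[mN _].
have [_ _ cm] := pairing m mN.
have m_rho : m != rho' m by apply/eqP => e; move: cm; rewrite -e eqxx.
by rewrite insert_pair_skip sign_bw_exponent_skip.
Qed.

End InsertPair.

(** * Induction on n *)

Definition good_pairing n (col : nat -> bool) (rho : nat -> nat) : Prop :=
  [/\ is_bw_pairing n col rho, planar n rho &
      pairing_exponent n col rho = couple_exponent (map col (couples n col)) (col 1) %[mod 2]].

Lemma pairing_exponent_insert_pair n' i col rho' :
  0 < i -> i <= (2 * n').+1 -> col i != col i.+1 ->
  is_bw_pairing n' (delete_pair i col) rho' ->
  pairing_exponent n'.+1 col (insert_pair i rho') =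
  pairing_exponent n' (delete_pair i col) rho' + i.-1 * flanked_by_couples col i %[mod 2].
Proof.
move=> i_pos i_le hneq pairing.
rewrite /pairing_exponent black_inversions_insert_pair // sign_bw_exponents_insert_pair //.
have := straddling_mod2 pairing i_pos i_le.
by case: (flanked_by_couples col i) => /=; rewrite ?muln0 ?muln1 ?addn0; lia.
Qed.

Lemma good_pairing_insert n' i col rho' :
  0 < i -> i <= (2 * n').+1 -> col i != col i.+1 ->
  good_pairing n' (delete_pair i col) rho' ->
  [/\ is_bw_pairing n'.+1 col (insert_pair i rho'), planar n'.+1 (insert_pair i rho') &
      pairing_exponent n'.+1 col (insert_pair i rho') =
      couple_exponent (map (delete_pair i col) (couples n' (delete_pair i col)))
                      (delete_pair i col 1) + i.-1 * flanked_by_couples col i %[mod 2]].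
Proof.
move=> i_pos i_le hneq [pairing planar' exponent'].
split; [exact: insert_pair_bw | exact: (insert_pair_planar i_pos i_le) |].
by rewrite pairing_exponent_insert_pair // -modnDml exponent' modnDml.
Qed.

Lemma good_pairing_interior n' i col rho' : 2 <= i -> i <= 2 * n' -> col i != col i.+1 ->
  count col (nodes n'.+1) = n'.+1 -> good_pairing n' (delete_pair i col) rho' ->
  good_pairing n'.+1 col (insert_pair i rho').
Proof.
move=> i_ge i_le hneq hcol good'.
have [k ek] : exists k, i = k.+2 by exists i.-2; lia.
have [bw pl e] := good_pairing_insert (ltn_trans (ltnSn 0) i_ge) (leqW i_le) hneq good'.
split => //; rewrite e; subst i.
rewrite (@couple_exponent_delete_pair n' k (2 * n'.+1 - k - 3)) //; lia.
Qed.

Lemma colour_const_interior n' (col : nat -> bool) :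
  (forall i, 2 <= i -> i <= 2 * n' -> col i = col i.+1) ->
  forall m, 2 <= m -> m <= (2 * n').+1 -> col m = col 2.
Proof.
move=> const; elim=> [|m IH] // m_ge m_le.
case: (eqVneq m 1) => [->//|m_1].
by rewrite -const; [apply: IH | ..]; lia.
Qed.

(* Without an interior bichromatic pair the colouring is x, y, ..., y, z with
   y repeated 2n-2 times; balance forces n <= 2 and then the couples are trivial. *)
Lemma good_pairing_boundary n' col :
  (forall i, 2 <= i -> i <= 2 * n' -> col i = col i.+1) ->
  count col (nodes n'.+1) = n'.+1 ->
  (forall col', count col' (nodes n') = n' -> exists rho', good_pairing n' col' rho') ->
  exists rho, good_pairing n'.+1 col rho.
Proof.
move=> const hcol IH.
have const2 := colour_const_interior const.
have nodes_ends : nodes n'.+1 = 1 :: iota 2 (2 * n') ++ [:: (2 * n').+2].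
  rewrite /nodes (_ : 2 * n'.+1 = (2 * n' + 1).+1); last by lia.
  by rewrite /= iotaD /= add2n.
have count_interior : count col (iota 2 (2 * n')) = col 2 * (2 * n').
  case e2 : (col 2).
    rewrite (eq_in_count (a2 := predT)) ?count_predT ?size_iota ?mul1n // => m.
    by rewrite mem_iota => hm; rewrite /= const2 ?e2 //; lia.
  rewrite (eq_in_count (a2 := pred0)) ?count_pred0 // => m.
  by rewrite mem_iota => hm; rewrite /= const2 ?e2 //; lia.
move: (hcol); rewrite nodes_ends /= count_cat count_interior /= addn0 => hcol2.
have n'01 : n' = 0 \/ n' = 1.
  by move: hcol2; case: (col 1); case: (col 2); case: (col (2 * n').+2) => /=; lia.
have col12 : col 1 != col 2.
  by move: hcol2; case: n'01 => [->|->] /=; case: (col 1); case: (col 2); case: (col 4).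
have [rho' good'] := IH _ (count_delete_pair (isT : 0 < 1) (ltn0Sn _) col12 hcol).
have [bw pl e] := good_pairing_insert (isT : 0 < 1) (ltn0Sn _) col12 good'.
exists (insert_pair 1 rho'); split => //; rewrite e mul0n addn0.
case: n'01 => [-> | n'1].
  rewrite /couples /nodes /= /next_node /= /delete_pair /skip_pair /=.
  by move: col12; case: (col 1); case: (col 2); case: (col 3).
have e2 : col 2 = ~~ col 1 by move: col12; case: (col 1); case: (col 2).
have e3 : col 3 = ~~ col 1 by rewrite -e2 (const 2) // n'1.
have e4 : col 4 = col 1.
  by move: hcol2; rewrite n'1 e2; case: (col 1); case: (col 4).
rewrite n'1.
have -> : couples 1 (delete_pair 1 col) = [::].
  by rewrite /couples /nodes /= /next_node /= /delete_pair /skip_pair /= e3 e4; case: (col 1).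
have -> : couples 2 col = [:: 2; 4].
  by rewrite /couples /nodes /= /next_node /= e2 e3 e4; case: (col 1).
by rewrite /delete_pair /skip_pair /= e2 e3 e4; case: (col 1).
Qed.

Lemma exists_good_pairing n col : count col (nodes n) = n -> exists rho, good_pairing n col rho.
Proof.
elim: n col => [|n' IH] col hcol.
  exists id; split=> [m | a b c d |] //.
  by rewrite /pairing_exponent /black_inversions /couples /nodes !big_nil; case: (col 1).
have [[i] | no_interior] :=
  altP (@hasP _ (fun i => col i != col i.+1) (iota 2 (2 * n' - 1))).
  rewrite mem_iota => i_range hneq.
  have i_pos : 0 < i by lia.
  have i_le : i <= (2 * n').+1 by lia.
  have [rho' good'] := IH _ (count_delete_pair i_pos i_le hneq hcol).
  by exists (insert_pair i rho'); apply: good_pairing_interior => //; lia.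
apply: good_pairing_boundary => // i i_ge i_le; apply/eqP; apply: contraNT no_interior => hneq.
by apply/hasP; exists i => //; rewrite mem_iota; lia.
Qed.

Local Open Scope ring_scope.

Theorem mainTheorem6 (n : nat) (col : nat -> bool)
    (hcol : count col (nodes n) = n) :
  exists rho : nat -> nat,
    [/\ is_bw_pairing n col rho, planar n rho &
        sign_BW n col rho * \prod_(b <- nodes n | col b) sign_bw col b (rho b)
        = sign_c n col].
Proof.
have [rho [pairing planar_rho exponent]] := exists_good_pairing hcol.
exists rho; split => //.
rewrite (pairing_signE pairing) (sign_c_couple_exponent (couples_balanced hcol)).
exact: sign_eq_mod2.
Qed.
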